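(* The map $\mathcal{M}:X^{\mathrm{polar}}_{d-1,d}\to X_{d-1,d}$, $\mathcal{M}(\Delta K^\pm(\rho,\eta Q))=\rho^{-1}\eta Q$ ($\rho\in\mathrm{SO}_d(\mathbb{R})$, $\eta\in P$), is a well-defined homeomorphism.
   Context: $X_{d-1,d}=\mathrm{SL}_d(\mathbb{R})/Q$ (quotient topology) is the space of homothety classes of rank-$(d-1)$ discrete subgroups of $\mathbb{R}^d$, where $Q=\{\begin{pmatrix}\lambda\gamma&*\\0&1/\det(\lambda\gamma)\end{pmatrix}:\lambda\in\mathbb{R}^\times,\gamma\in\mathrm{GL}_{d-1}(\mathbb{Z})\}$ is the stabilizer of the class of $\mathrm{span}_\mathbb{Z}\{e_1,\dots,e_{d-1}\}$. $P=\{\begin{pmatrix}m&*\\0&1/\det m\end{pmatrix}:m\in\mathrm{GL}_{d-1}(\mathbb{R})\}\supseteq Q$. $K^\pm=P\cap\mathrm{SO}_d(\mathbb{R})$, $\Delta K^\pm=\{(k,k):k\in K^\pm\}\le\mathrm{SO}_d(\mathbb{R})\times P$, acting on $\mathrm{SO}_d(\mathbb{R})\times P/Q$ by left multiplication in both coordinates, and $X^{\mathrm{polar}}_{d-1,d}=\Delta K^\pm\backslash(\mathrm{SO}_d(\mathbb{R})\times P/Q)$ with the quotient topology. *)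

From HB Require Import structures.
From mathcomp Require Import all_boot all_order all_algebra.
From mathcomp Require Import all_classical all_reals all_analysis.
Unset Printing Implicit Defensive.
Import Order.TTheory GRing.Theory Num.Theory.
Import numFieldNormedType.Exports.
Local Open Scope classical_set_scope.
Local Open Scope ring_scope.

(* For an orbit map of a group action (e.g. g |-> gQ) this is
   exactly the orbit space with the quotient topology. *)
Definition quot {T : Type} (cls : T -> set T) : Type := set_type (range cls).

HB.instance Definition _ (T : Type) (cls : T -> set T) :=
  Choice.on (@quot T cls).

Definition qpi {T : Type} (cls : T -> set T) (x : T) : quot cls :=
  SigSub (mem_set (imageT cls x)).

Section QuotTop.
Context {T : topologicalType} (cls : T -> set T).
Definition quot_open (U : set (quot cls)) := open (qpi cls @^-1` U).

Program Definition quot_topological_mixin :=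
  @isOpenTopological.Build (quot cls) quot_open _ _ _.
Next Obligation. by rewrite /quot_open preimage_setT; exact: openT. Qed.
Next Obligation. by move=> ? ? ? ?; exact: openI. Qed.
Next Obligation. by move=> I f ofi; apply: bigcup_open => i _; exact: ofi. Qed.
HB.instance Definition _ := quot_topological_mixin.
End QuotTop.

Definition SLset (R : realType) (n : nat) : set ('M[R]_(n + 1)) :=
  [set g | \det g = 1].

Definition Qset (R : realType) (n : nat) : set ('M[R]_(n + 1)) :=
  [set g | exists (lam : R) (gam : 'M[int]_n) (b : 'M[R]_(n, 1)),
      [/\ lam != 0, gam \in unitmx &
       g = block_mx (lam *: map_mx (fun z : int => z%:~R : R) gam) b 0
             ((\det (lam *: map_mx (fun z : int => z%:~R : R) gam))^-1)%:M]].

Definition Pset (R : realType) (n : nat) : set ('M[R]_(n + 1)) :=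
  [set g | exists (m : 'M[R]_n) (b : 'M[R]_(n, 1)),
      m \in unitmx /\ g = block_mx m b 0 ((\det m)^-1)%:M].

Definition SOset (R : realType) (n : nat) : set ('M[R]_(n + 1)) :=
  [set k | k *m k^T = 1%:M /\ \det k = 1].

Definition Kset (R : realType) (n : nat) : set ('M[R]_(n + 1)) := Pset R n `&` SOset R n.

Notation SLt R n := (set_type (SLset R n)).
Notation Pt R n := (set_type (Pset R n)).
Notation SOt R n := (set_type (SOset R n)).

Definition cosetSL (R : realType) (n : nat) (g : SLt R n) : set (SLt R n) :=
  [set h | exists q, Qset R n q /\ val h = val g *m q].
Definition cosetP (R : realType) (n : nat) (eta : Pt R n) : set (Pt R n) :=
  [set h | exists q, Qset R n q /\ val h = val eta *m q].

Notation Xspace R n := (quot (@cosetSL R n)).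
Notation PQ R n := (quot (@cosetP R n)).

Definition lmulP {R : realType} {n : nat} (k : 'M[R]_(n + 1)) (A : set (Pt R n)) :
    set (Pt R n) :=
  [set h | exists2 e, A e & val h = k *m val e].

Definition polar_orbit (R : realType) (n : nat) (x : SOt R n * PQ R n) :
    set (SOt R n * PQ R n) :=
  [set y | exists k, [/\ Kset R n k, val y.1 = k *m val x.1 &
                         val y.2 = lmulP k (val x.2)]].

Notation Xpolar R n := (quot (@polar_orbit R n)).

From HB Require Import structures.
From mathcomp Require Import all_boot all_order all_algebra.
From mathcomp Require Import all_classical all_reals all_analysis.
From mathcomp Require Import ring lra.
Import Order.TTheory GRing.Theory Num.Theory.
Import numFieldNormedType.Exports.
Local Open Scope classical_set_scope.
Local Open Scope ring_scope.

(* The inverse of M sends gQ to the orbit of (rho, rho g Q), where rho in SO_d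
   has last row a unit multiple of the last row u of g^-1 (the last row of
   adj g): then rho g has last row proportional to e_d, i.e. it lies in P.  Two
   such rho, also for g and for g q, differ by an element of K^+-, so the orbit
   is well defined.  A rotation with prescribed last row is the Householder
   reflection exchanging u and s e_d (s = +-1) with its last row multiplied by
   its determinant; for fixed s it depends continuously on g as long as
   u != s e_d, and taking s opposite to the sign of u_d makes this hold near any
   g, so the inverse is continuous.  M is continuous because (rho, eta) |->
   rho^T eta is, and SO_d x P -> SO_d x P/Q is an open surjection, Q acting on P
   by homeomorphisms. *)

Section Quotient.
Context {T : Type} {cls : T -> set T}.

Definition qrep (X : quot cls) : T := s2val (cid2 (set_valP X)).

Lemma qrep_class X : cls (qrep X) = val X.
Proof. by rewrite /qrep; case: cid2. Qed.

Lemma qrepK X : qpi cls (qrep X) = X.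
Proof. by apply: val_inj; rewrite /= qrep_class. Qed.

Hypothesis cls_refl : forall x, cls x x.
Hypothesis cls_trans : forall x y, cls x y -> cls y = cls x.

Lemma qpi_eqP x y : qpi cls x = qpi cls y <-> cls x y.
Proof.
split=> [/(congr1 val) /= -> // | /cls_trans cls_yx].
by apply: val_inj; rewrite /= cls_yx.
Qed.

End Quotient.

Definition open_map {A B : topologicalType} (p : A -> B) :=
  forall U, open U -> open (p @` U).

Lemma open_map_continuous {A B C : topologicalType} (p : A -> B) (f : B -> C) :
  open_map p -> (forall y, exists x, p x = y) -> continuous (f \o p) ->
  continuous f.
Proof.
move=> p_open p_surj fp_cont y W /=; have [x <-] := p_surj y.
move=> /(fp_cont x); rewrite nbhsE => -[U [oU Ux] UW].
apply: (@filterS _ _ _ (p @` U)); first by move=> _ [z Uz <-]; exact: UW.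
by apply: open_nbhs_nbhs; split; [exact: p_open | exists x].
Qed.

Lemma open_map_pair_id {A B C : topologicalType} (p : B -> C) :
  open_map p -> open_map (fun z : A * B => (z.1, p z.2)).
Proof.
move=> p_open U; rewrite !openE => oU _ [[a b] Uab <-].
have [[A1 B1] /= [A1a B1b] A1B1U] := oU _ Uab.
move: B1b; rewrite nbhsE => -[B2 [oB2 B2b] B2B1].
exists (A1, p @` B2) => /=.
  by split=> //; apply: open_nbhs_nbhs; split; [exact: p_open | exists b].
move=> [a' _] /= [A1a' [b' B2b' <-]].
by exists (a', b') => //; apply: A1B1U; split=> //; exact: B2B1.
Qed.

Section QuotientTopology.
Context {T : topologicalType} (cls : T -> set T).

Lemma qpi_continuous : continuous (qpi cls).
Proof. by apply/continuousP => U oU; exact: oU. Qed.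

Lemma quot_continuous {Z : topologicalType} (f : quot cls -> Z) :
  continuous (f \o qpi cls) -> continuous f.
Proof. by move=> /continuousP f_cont; apply/continuousP => U /f_cont. Qed.

Lemma qpi_open {I : Type} (G : set I) (act : I -> T -> T) :
  (forall x, cls x x) -> (forall x y, cls x y -> cls y = cls x) ->
  (forall g, G g -> continuous (act g)) ->
  (forall x y, cls x y <-> exists2 g, G g & act g x = y) ->
  open_map (qpi cls).
Proof.
move=> cls_refl cls_trans act_cont clsE U oU.
change (open (qpi cls @^-1` (qpi cls @` U))).
have -> : qpi cls @^-1` (qpi cls @` U) = \bigcup_(g in G) (act g @^-1` U).
  have qpi_eqE := qpi_eqP cls_refl cls_trans.
  apply/seteqP; split=> [x [y Uy /esym/qpi_eqE/clsE [g Gg gxy]] | x [g Gg Ugx]].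
    by exists g => //=; rewrite gxy.
  by exists (act g x) => //; apply/esym/qpi_eqE/clsE; exists g.
apply: bigcup_open => g Gg; move/continuousP: (act_cont g Gg); exact.
Qed.

End QuotientTopology.

Lemma cvg_insubd {X : topologicalType} {A : set X} {d : set_type A}
    {T : Type} {F : set_system T} {FF : Filter F} {f : T -> X} {a : X} :
  A a -> f @ F --> a -> (\forall t \near F, A (f t)) ->
  (insubd d (f t) : set_type A) @[t --> F] --> (insubd d a : set_type A).
Proof.
move=> Aa fa nearA U /=; rewrite nbhsE => -[B [[C oC <-] Ba] BU].
have Ca : C a by move: Ba; rewrite /= set_valE insubdK //; exact: mem_set.
have : \forall t \near F, C (f t) by apply: fa; apply: open_nbhs_nbhs.
apply: filterS2 nearA => t At Cft; apply: BU => /=.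
by rewrite set_valE insubdK //; exact: mem_set.
Qed.

Lemma val_set_continuous {X : topologicalType} {A : set X} :
  continuous (fun x : set_type A => val x).
Proof. exact: initial_continuous. Qed.

Section MatrixLimits.
Context {R : numFieldType} {T : Type} {F : set_system T} {FF : Filter F}.

Lemma cvg_mxP {m k} {f : T -> 'M[R]_(m, k)} {A : 'M[R]_(m, k)} :
  f @ F --> A <-> forall i j, (fun t => f t i j) @ F --> A i j.
Proof.
split=> [fA i j | fA U [P PA PU]].
  exact: (cvg_comp _ _ fA (@coord_continuous R m k i j A)).
have : \forall t \near F, forall i j, P i j (f t i j).
  by apply: filter_forall => i; apply: filter_forall => j; exact: fA.
by apply: filterS => t Pft; apply: PU.
Qed.

Lemma cvg_mulmx {m k p} {f : T -> 'M[R]_(m, k)} {g : T -> 'M[R]_(k, p)}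
    {A : 'M[R]_(m, k)} {B : 'M[R]_(k, p)} :
  f @ F --> A -> g @ F --> B -> (fun t => f t *m g t) @ F --> A *m B.
Proof.
move=> /cvg_mxP fA /cvg_mxP gB; apply/cvg_mxP => i j; rewrite mxE.
under eq_cvg do rewrite mxE.
apply: cvg_big => [|l _]; first exact: add_continuous.
exact: cvgM.
Qed.

Lemma cvg_trmx {m k} {f : T -> 'M[R]_(m, k)} {A : 'M[R]_(m, k)} :
  f @ F --> A -> (fun t => (f t)^T) @ F --> A^T.
Proof.
move=> /cvg_mxP fA; apply/cvg_mxP => i j; rewrite mxE.
under eq_cvg do rewrite mxE.
exact: fA.
Qed.

Lemma cvg_row {m k} (i0 : 'I_m) {f : T -> 'M[R]_(m, k)} {A : 'M[R]_(m, k)} :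
  f @ F --> A -> (fun t => row i0 (f t)) @ F --> row i0 A.
Proof.
move=> /cvg_mxP fA; apply/cvg_mxP => i j; rewrite mxE.
under eq_cvg do rewrite mxE.
exact: fA.
Qed.

Lemma cvg_diag_mx {k} {f : T -> 'rV[R]_k} {a : 'rV[R]_k} :
  f @ F --> a -> (fun t => diag_mx (f t)) @ F --> diag_mx a.
Proof.
move=> /cvg_mxP fa; apply/cvg_mxP => i j; rewrite mxE.
under eq_cvg do rewrite mxE.
by case: (i == j); [exact: fa | exact: cvg_cst].
Qed.

Lemma cvg_det {k} {f : T -> 'M[R]_k} {A : 'M[R]_k} :
  f @ F --> A -> (fun t => \det (f t)) @ F --> \det A.
Proof.
move=> /cvg_mxP fA; rewrite /determinant.
apply: cvg_big => [|s _]; first exact: add_continuous.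
apply: cvgM; first exact: cvg_cst.
apply: cvg_big => [|i _]; [exact: mul_continuous | exact: fA].
Qed.

Lemma cvg_adj {k} {f : T -> 'M[R]_k} {A : 'M[R]_k} :
  f @ F --> A -> (fun t => \adj (f t)) @ F --> \adj A.
Proof.
move=> /cvg_mxP fA; apply/cvg_mxP => i j; rewrite mxE /cofactor.
under eq_cvg do rewrite mxE /cofactor.
apply: cvgM; first exact: cvg_cst.
apply: cvg_det; apply/cvg_mxP => a b; rewrite !mxE.
under eq_cvg do rewrite !mxE.
exact: fA.
Qed.

End MatrixLimits.

Section Reflection.
Context {R : fieldType} {m : nat}.
Implicit Types (w : 'rV[R]_m).

Definition row_sqnorm w := (w *m w^T) 0 0.

Definition reflection w : 'M[R]_m := 1%:M - (2 / row_sqnorm w) *: (w^T *m w).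

Lemma reflection_tr w : (reflection w)^T = reflection w.
Proof. by rewrite /reflection linearB /= linearZ /= trmx_mul trmxK trmx1. Qed.

Lemma reflection_invol w :
  row_sqnorm w != 0 -> reflection w *m reflection w = 1%:M.
Proof.
move=> w_neq0; rewrite /reflection; set c := 2 / row_sqnorm w.
have wTw2 : w^T *m w *m (w^T *m w) = row_sqnorm w *: (w^T *m w).
  by rewrite mulmxA -(mulmxA w^T) [w *m _]mx11_scalar mul_mx_scalar scalemxAl.
rewrite mulmxBl mul1mx mulmxBr mulmx1 -scalemxAl -scalemxAr wTw2 !scalerA.
have -> : c * c * row_sqnorm w = c + c by rewrite /c; field.
by rewrite scalerDl opprB addrK subrK.
Qed.

End Reflection.

Section Householder.
Context {R : fieldType} {m : nat} (i : 'I_m).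
Local Notation e := (delta_mx 0 i : 'rV[R]_m).
Implicit Types (s c : R) (u : 'rV[R]_m).

Definition householder s u := reflection (u - s *: e).

Lemma mul_delta_tr u : u *m e^T = (u 0 i)%:M.
Proof. by rewrite [LHS]mx11_scalar trmx_delta -colE mxE. Qed.

Lemma delta_mul_tr u : e *m u^T = (u 0 i)%:M.
Proof. by rewrite [LHS]mx11_scalar -rowE !mxE. Qed.

Lemma row_sqnorm_householder s u : u *m u^T = 1%:M -> s ^+ 2 = 1 ->
  row_sqnorm (u - s *: e) = 2 - 2 * s * u 0 i.
Proof.
move=> uuT s2; rewrite /row_sqnorm.
have -> : (u - s *: e)^T = u^T - s *: e^T by rewrite linearB /= linearZ.
rewrite mulmxBl !mulmxBr -!scalemxAl -!scalemxAr.
rewrite uuT mul_delta_tr delta_mul_tr trmx_delta mul_delta_mx scalerA.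
by rewrite !mxE !eqxx /= !mulr1n -expr2 s2 mulr1; ring.
Qed.

Lemma row_householder s u : u *m u^T = 1%:M -> s ^+ 2 = 1 ->
  row_sqnorm (u - s *: e) != 0 -> row i (householder s u) = s *: u.
Proof.
move=> uuT s2; rewrite row_sqnorm_householder // => norm_neq0.
rewrite rowE /householder /reflection mulmxBr mulmx1 -scalemxAr mulmxA.
rewrite delta_mul_tr mul_scalar_mx scalerA row_sqnorm_householder //.
rewrite !mxE !eqxx /= mulr1.
have -> : 2 / (2 - 2 * s * u 0 i) * (u 0 i - s) = - s.
  apply: (mulIf norm_neq0); rewrite mulrAC divfK //.
  apply/eqP; rewrite -subr_eq0; apply/eqP.
  transitivity (2 * u 0 i * (1 - s ^+ 2)); first by ring.
  by rewrite s2 subrr mulr0.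
by rewrite scaleNr opprK scalerBr scalerA -expr2 s2 scale1r addrC subrK.
Qed.

Definition sign_fix c : 'M[R]_m := diag_mx (\row_j (if j == i then c else 1)).

Lemma sign_fix_invol c : c ^+ 2 = 1 -> sign_fix c *m sign_fix c = 1%:M.
Proof.
move=> c2; rewrite mulmx_diag -diag_const_mx; congr diag_mx.
by apply/rowP => j; rewrite !mxE; case: ifP => _; rewrite ?mulr1 // -expr2 c2.
Qed.

Lemma det_sign_fix c : \det (sign_fix c) = c.
Proof.
rewrite det_diag (bigD1 i) //= big1 ?mulr1 => [|j /negPf j_neq_i].
  by rewrite mxE eqxx.
by rewrite mxE j_neq_i.
Qed.

Lemma row_sign_fix c (A : 'M[R]_m) : row i (sign_fix c *m A) = c *: row i A.
Proof. by apply/rowP => j; rewrite mul_diag_mx !mxE eqxx. Qed.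

(* A reflection has determinant -1; rescaling its i-th row by its determinant
   yields a rotation without computing that determinant. *)
Definition householder_rotation s u : 'M[R]_m :=
  sign_fix (\det (householder s u)) *m householder s u.

Lemma householder_rotation_mulmxT s u : row_sqnorm (u - s *: e) != 0 ->
  householder_rotation s u *m (householder_rotation s u)^T = 1%:M.
Proof.
move=> /reflection_invol HH; rewrite /householder_rotation trmx_mul.
rewrite reflection_tr tr_diag_mx -!mulmxA (mulmxA (householder s u)) HH mul1mx.
by apply: sign_fix_invol; rewrite expr2 -det_mulmx HH det1.
Qed.

Lemma det_householder_rotation s u : row_sqnorm (u - s *: e) != 0 ->
  \det (householder_rotation s u) = 1.
Proof.
move=> /reflection_invol HH.
by rewrite det_mulmx det_sign_fix -det_mulmx HH det1.
Qed.

Lemma row_householder_rotation s u : u *m u^T = 1%:M -> s ^+ 2 = 1 ->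
  row_sqnorm (u - s *: e) != 0 ->
  row i (householder_rotation s u) = (\det (householder s u) * s) *: u.
Proof.
by move=> *; rewrite row_sign_fix row_householder // scalerA.
Qed.

End Householder.

Section ReflectionLimits.
Context {R : numFieldType} {m : nat} (i : 'I_m).
Context {T : Type} {F : set_system T} {FF : Filter F}.
Local Notation e := (delta_mx 0 i : 'rV[R]_m).

Lemma cvg_row_sqnorm {w : T -> 'rV[R]_m} {a : 'rV[R]_m} :
  w @ F --> a -> (fun t => row_sqnorm (w t)) @ F --> row_sqnorm a.
Proof.
by move=> wa; apply: (proj1 cvg_mxP); exact: cvg_mulmx wa (cvg_trmx wa).
Qed.

Lemma cvg_reflection {w : T -> 'rV[R]_m} {a : 'rV[R]_m} :
  row_sqnorm a != 0 -> w @ F --> a ->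
  (fun t => reflection (w t)) @ F --> reflection a.
Proof.
move=> a_neq0 wa; apply: cvgB; first exact: cvg_cst.
apply: cvgZ; last by apply: cvg_mulmx => //; exact: cvg_trmx.
by apply: cvgM; [exact: cvg_cst | apply: cvgV => //; exact: cvg_row_sqnorm].
Qed.

Lemma cvg_sign_fix {c : T -> R} {c0 : R} :
  c @ F --> c0 -> (fun t => sign_fix i (c t)) @ F --> sign_fix i c0.
Proof.
move=> cc0; apply: cvg_diag_mx; apply/cvg_mxP => k j; rewrite mxE.
under eq_cvg do rewrite mxE.
by case: (j == i); [exact: cc0 | exact: cvg_cst].
Qed.

Lemma cvg_householder_rotation {s : R} {u : T -> 'rV[R]_m} {a : 'rV[R]_m} :
  row_sqnorm (a - s *: e) != 0 -> u @ F --> a ->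
  (fun t => householder_rotation i s (u t)) @ F --> householder_rotation i s a.
Proof.
move=> a_neq0 ua.
have refl_cvg : (fun t => householder i s (u t)) @ F --> householder i s a.
  by apply: cvg_reflection => //; apply: cvgB => //; exact: cvg_cst.
by apply: cvg_mulmx => //; apply: cvg_sign_fix; exact: cvg_det.
Qed.

End ReflectionLimits.

Section HouseholderSign.
Context {R : realFieldType} {m : nat} (i : 'I_m).
Local Notation e := (delta_mx 0 i : 'rV[R]_m).
Implicit Types (u w : 'rV[R]_m).

(* For a unit vector u this sign gives |u - s e_i|^2 = 2 + 2 |u_i| >= 2. *)
Definition axis_sign u : R := if u 0 i < 0 then 1 else -1.

Lemma axis_sign_sqr u : axis_sign u ^+ 2 = 1.
Proof. by rewrite /axis_sign; case: ifP; rewrite ?sqrrN expr1n. Qed.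

Lemma row_sqnorm_axis_sign_gt0 u :
  u *m u^T = 1%:M -> 0 < row_sqnorm (u - axis_sign u *: e).
Proof.
move=> uuT; rewrite row_sqnorm_householder ?axis_sign_sqr // /axis_sign.
by case: (ltP (u 0 i) 0) => u_i; lra.
Qed.

Lemma row_sqnormE w : row_sqnorm w = \sum_j w 0 j ^+ 2.
Proof.
by rewrite /row_sqnorm mxE; apply: eq_bigr => j _; rewrite mxE expr2.
Qed.

Lemma row_sqnorm_gt0 w : w != 0 -> 0 < row_sqnorm w.
Proof.
move=> w_neq0; rewrite row_sqnormE lt_def sumr_ge0 ?andbT => [|j _]; last first.
  exact: sqr_ge0.
apply: contra w_neq0 => /eqP /psumr_eq0P w0; apply/eqP/rowP => j; rewrite mxE.
by apply/eqP; rewrite -sqrf_eq0; apply/eqP/w0 => // k _; exact: sqr_ge0.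
Qed.

End HouseholderSign.

Section AdjugateFrame.
Context {R : realType} {m : nat} (i : 'I_m).
Local Notation e := (delta_mx 0 i : 'rV[R]_m).
Implicit Types (s : R) (g : 'M[R]_m).

Definition adj_row g := row i (\adj g).

Lemma adj_row_mul g : adj_row g *m g = \det g *: e.
Proof. by rewrite /adj_row -row_mul mul_adj_mx rowE mul_mx_scalar. Qed.

Lemma adj_row_neq0 g : \det g != 0 -> adj_row g != 0.
Proof.
move=> det_neq0; apply: contraNneq det_neq0 => adj_row0.
move: (adj_row_mul g); rewrite adj_row0 mul0mx => /rowP /(_ i).
by rewrite !mxE !eqxx mulr1 => /esym ->.
Qed.

Definition unit_adj_row g :=
  (Num.sqrt (row_sqnorm (adj_row g)))^-1 *: adj_row g.

Lemma unit_adj_row_unit g :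
  \det g != 0 -> unit_adj_row g *m (unit_adj_row g)^T = 1%:M.
Proof.
move=> /adj_row_neq0 /row_sqnorm_gt0 norm_gt0.
rewrite /unit_adj_row linearZ /= -scalemxAl -scalemxAr scalerA.
rewrite [_ *m _]mx11_scalar -/(row_sqnorm _) -mul_scalar_mx -scalar_mxM.
by rewrite -invfM -expr2 sqr_sqrtr ?ltW // mulVf ?gt_eqF.
Qed.

Definition adj_frame s g := householder_rotation i s (unit_adj_row g).

Lemma row_adj_frame_mul {s g} : \det g != 0 -> s ^+ 2 = 1 ->
  row_sqnorm (unit_adj_row g - s *: e) != 0 ->
  exists c, row i (adj_frame s g *m g) = c *: e.
Proof.
move=> det_neq0 s2 norm_neq0; rewrite row_mul row_householder_rotation //.
  by rewrite -scalemxAl /unit_adj_row -scalemxAl adj_row_mul !scalerA; eexists.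
exact: unit_adj_row_unit.
Qed.

Lemma cvg_unit_adj_row {T : Type} {F : set_system T} {FF : Filter F}
    {f : T -> 'M[R]_m} {g} :
  \det g != 0 -> f @ F --> g ->
  (fun t => unit_adj_row (f t)) @ F --> unit_adj_row g.
Proof.
move=> /adj_row_neq0 /row_sqnorm_gt0 norm_gt0 fg.
have adj_cvg : (fun t => adj_row (f t)) @ F --> adj_row g.
  by apply: cvg_row; exact: cvg_adj.
apply: cvgZ => //; apply: cvgV; first by rewrite gt_eqF // sqrtr_gt0.
by apply: continuous_cvg; [exact: sqrt_continuous | exact: cvg_row_sqnorm].
Qed.

Lemma cvg_adj_frame {s} {T : Type} {F : set_system T} {FF : Filter F}
    {f : T -> 'M[R]_m} {g} :
  \det g != 0 -> row_sqnorm (unit_adj_row g - s *: e) != 0 -> f @ F --> g ->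
  (fun t => adj_frame s (f t)) @ F --> adj_frame s g.
Proof.
move=> det_neq0 norm_neq0 fg.
by apply: cvg_householder_rotation => //; exact: cvg_unit_adj_row.
Qed.

End AdjugateFrame.

Section Subgroups.
Context {R : realType} {n : nat}.
Local Notation M := 'M[R]_(n + 1).
Local Notation intmx := (map_mx (fun z : int => z%:~R : R)).
Implicit Types a b g k q : M.

Lemma PsetP g : Pset R n g <-> \det g = 1 /\ dlsubmx g = 0.
Proof.
split=> [[m [b [m_unit ->]]] | [det_g dl_g]].
  rewrite det_ublock det_mx11 block_mxKdl mxE eqxx mulr1n.
  by rewrite mulfV // -unitfE -unitmxE.
have det_blocks : \det (ulsubmx g) * drsubmx g 0 0 = 1.
  by rewrite -det_mx11 -(det_ublock _ (ursubmx g)) -dl_g submxK.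
have ul_unit : \det (ulsubmx g) != 0.
  by apply: contra_eq_neq det_blocks => ->; rewrite mul0r eq_sym oner_neq0.
exists (ulsubmx g), (ursubmx g); split; first by rewrite unitmxE unitfE.
rewrite -{1}[g]submxK dl_g [drsubmx g]mx11_scalar.
congr (block_mx _ _ _ _%:M); apply: (mulfI ul_unit).
by rewrite det_blocks mulfV.
Qed.

Lemma Pset_det {g} : Pset R n g -> \det g = 1.
Proof. by case/PsetP. Qed.

Lemma Pset1 : Pset R n 1%:M.
Proof. by apply/PsetP; rewrite det1 (scalar_mx_block n 1) block_mxKdl. Qed.

Lemma PsetM {a b} : Pset R n a -> Pset R n b -> Pset R n (a *m b).
Proof.
move=> /PsetP [det_a dl_a] /PsetP [det_b dl_b]; apply/PsetP.
rewrite det_mulmx det_a det_b mulr1 -[a]submxK -[b]submxK dl_a dl_b.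
by rewrite mulmx_block block_mxKdl !mul0mx mulmx0 addr0.
Qed.

Lemma Pset_cancelr {a b} :
  Pset R n b -> \det a = 1 -> Pset R n (a *m b) -> Pset R n a.
Proof.
move=> [m [c [m_unit ->]]] det_a /PsetP [_ dl_ab]; apply/PsetP; split=> //.
move: dl_ab; rewrite -{1}[a]submxK mulmx_block block_mxKdl mulmx0 addr0.
by move/(congr1 (mulmx^~ (invmx m))); rewrite -mulmxA mulmxV // mulmx1 mul0mx.
Qed.

Lemma SOset_det {k} : SOset R n k -> \det k = 1.
Proof. by case. Qed.

Lemma SOset_trK {k} : SOset R n k -> k^T *m k = 1%:M.
Proof. by case=> /mulmx1C. Qed.

Lemma SOset_inv {k} : SOset R n k -> invmx k = k^T.
Proof.
move=> [kkT det_k]; have k_unit : k \in unitmx by rewrite unitmxE det_k unitr1.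
by rewrite -[k^T]mul1mx -(mulVmx k_unit) -mulmxA kkT mulmx1.
Qed.

Lemma SOset1 : SOset R n 1%:M.
Proof. by rewrite /SOset /= trmx1 mulmx1 det1. Qed.

Lemma SOsetM {a b} : SOset R n a -> SOset R n b -> SOset R n (a *m b).
Proof.
move=> [aaT det_a] [bbT det_b].
split; last by rewrite det_mulmx det_a det_b mulr1.
by rewrite trmx_mul mulmxA -(mulmxA a) bbT mulmx1 aaT.
Qed.

Lemma SOset_tr {k} : SOset R n k -> SOset R n k^T.
Proof.
by move=> k_SO; split; rewrite ?trmxK ?SOset_trK // det_tr SOset_det.
Qed.

Lemma Kset1 : Kset R n 1%:M.
Proof. by split; [exact: Pset1 | exact: SOset1]. Qed.

Lemma KsetM {a b} : Kset R n a -> Kset R n b -> Kset R n (a *m b).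
Proof. by move=> [Pa SOa] [Pb SOb]; split; [exact: PsetM | exact: SOsetM]. Qed.

Lemma Kset_tr {k} : Kset R n k -> Kset R n k^T.
Proof.
move=> [Pk SOk]; split; last exact: SOset_tr.
apply: (Pset_cancelr Pk); first by rewrite det_tr SOset_det.
by rewrite SOset_trK //; exact: Pset1.
Qed.

Lemma Qset1 : Qset R n 1%:M.
Proof.
exists 1, 1%:M, 0; split; rewrite ?oner_eq0 ?unitmx1 //.
by rewrite map_mx1 scale1r det1 invr1 (scalar_mx_block n 1).
Qed.

Lemma QsetM {a b} : Qset R n a -> Qset R n b -> Qset R n (a *m b).
Proof.
move=> [l1 [g1 [b1 [l1_neq0 g1_unit ->]]]] [l2 [g2 [b2 [l2_neq0 g2_unit ->]]]].
set A1 := l1 *: intmx g1; set A2 := l2 *: intmx g2.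
have A1A2 : A1 *m A2 = (l1 * l2) *: intmx (g1 *m g2).
  by rewrite -scalemxAl -scalemxAr scalerA map_mxM.
exists (l1 * l2), (g1 *m g2), (A1 *m b2 + b1 *m (\det A2)^-1%:M); split.
- by rewrite mulf_neq0.
- by rewrite unitmx_mul g1_unit g2_unit.
rewrite mulmx_block !mulmx0 !mul0mx !addr0 !add0r -A1A2.
by rewrite det_mulmx invfM scalar_mxM.
Qed.

Lemma Qset_inv {q} : Qset R n q -> exists2 q', Qset R n q' & q *m q' = 1%:M.
Proof.
move=> [l [g [b [l_neq0 g_unit ->]]]].
set A := l *: intmx g; set A' := l^-1 *: intmx (invmx g).
have AA' : A *m A' = 1%:M.
  rewrite -scalemxAl -scalemxAr scalerA -map_mxM mulmxV // map_mx1.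
  by rewrite mulfV // scale1r.
set b' := - (A' *m b *m (\det A')^-1%:M).
exists (block_mx A' b' 0 (\det A')^-1%:M).
  by exists l^-1, (invmx g), b'; rewrite invr_eq0 unitmx_inv.
rewrite mulmx_block !mulmx0 !mul0mx !addr0 !add0r AA' /b' mulmxN !mulmxA AA'.
rewrite mul1mx addNr -scalar_mxM -invfM -det_mulmx AA' det1 invr1.
by rewrite -(scalar_mx_block n 1).
Qed.

Lemma Qset_sub_Pset {q} : Qset R n q -> Pset R n q.
Proof.
move=> Qq; have [q' _ /mulmx1_unit [q_unit _]] := Qset_inv Qq.
move: Qq q_unit => [l [g [b [_ _ ->]]]].
rewrite unitmxE det_ublock unitrM -unitmxE => /andP [A_unit _].
by exists (l *: intmx g), b.
Qed.

Definition Qcoset {A : set M} (g : set_type A) : set (set_type A) :=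
  [set h | exists q, Qset R n q /\ val h = val g *m q].

Lemma Qcoset_refl {A : set M} (x : set_type A) : Qcoset x x.
Proof. by exists 1%:M; rewrite mulmx1; split=> //; exact: Qset1. Qed.

Lemma Qcoset_trans {A : set M} (x y : set_type A) :
  Qcoset x y -> Qcoset y = Qcoset x.
Proof.
move=> [q [Qq y_xq]]; have [q' Qq' qq'] := Qset_inv Qq.
apply/seteqP; split=> z [q2 [Qq2 z_eq]]; rewrite /Qcoset /= z_eq ?y_xq.
  by exists (q *m q2); rewrite mulmxA; split=> //; exact: QsetM.
exists (q' *m q2); split; first exact: QsetM.
by rewrite -mulmxA (mulmxA q) qq' mul1mx.
Qed.

Lemma lmulP1 (A : set (Pt R n)) : lmulP 1%:M A = A.
Proof.
apply/seteqP; split=> [h [e Ae] | h Ah]; last by exists h; rewrite ?mul1mx.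
by rewrite mul1mx => /val_inj ->.
Qed.

Lemma lmulPM a b (A : set (Pt R n)) :
  Pset R n b -> lmulP a (lmulP b A) = lmulP (a *m b) A.
Proof.
move=> Pb; apply/seteqP; rewrite /lmulP; split=> h /=.
  by move=> [_ [e Ae ->] ->]; exists e; rewrite ?mulmxA.
move=> [e Ae ->].
have Pbe : Pset R n (b *m val e) by apply: PsetM => //; exact: set_valP.
by exists (SigSub (mem_set Pbe)); [exists e | rewrite /= mulmxA].
Qed.

Lemma polar_orbit_refl x : polar_orbit R n x x.
Proof. by exists 1%:M; rewrite mul1mx lmulP1; split=> //; exact: Kset1. Qed.

Lemma polar_orbit_trans x y :
  polar_orbit R n x y -> polar_orbit R n y = polar_orbit R n x.
Proof.
move=> [k [Kk y1 y2]]; have [Pk SOk] := Kk; have [PkT _] := Kset_tr Kk.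
apply/seteqP; split=> z [k' [Kk' z1 z2]].
  exists (k' *m k); split; first exact: KsetM.
    by rewrite z1 y1 mulmxA.
  by rewrite z2 y2 lmulPM.
exists (k' *m k^T); split; first by apply: KsetM => //; exact: Kset_tr.
  by rewrite z1 y1 -mulmxA (mulmxA k^T) SOset_trK // mul1mx.
by rewrite z2 y2 lmulPM // -mulmxA SOset_trK // mulmx1.
Qed.

End Subgroups.

Section PolarMap.
Context {R : realType} {n : nat}.
Local Notation M := 'M[R]_(n + 1).
Local Notation lst := (rshift n (ord0 : 'I_1)).
Local Notation e_lst := (delta_mx 0 lst : 'rV[R]_(n + 1)).
Local Notation qSL := (qpi (@cosetSL R n)).
Local Notation qP := (qpi (@cosetP R n)).
Local Notation qO := (qpi (@polar_orbit R n)).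
Implicit Types (s : R) (g k q : M).

Lemma Pset_row_last g c : \det g = 1 -> row lst g = c *: e_lst -> Pset R n g.
Proof.
move=> det_g row_g; apply/PsetP; split=> //; apply/matrixP => i j.
have := congr1 (fun v : 'rV_(n + 1) => v 0 (lshift 1 j)) row_g.
by rewrite (ord1 i) !mxE eq_lrshift andbF mulr0 => ->.
Qed.

(* Off the corresponding subset these return the identity matrix. *)
Definition toSL g : SLt R n := insubd (SigSub (mem_set (det1 R (n + 1)))) g.
Definition toP g : Pt R n := insubd (SigSub (mem_set (@Pset1 R n))) g.
Definition toSO g : SOt R n := insubd (SigSub (mem_set (@SOset1 R n))) g.

Lemma val_toSL g : SLset R n g -> val (toSL g) = g.
Proof. by move=> SLg; rewrite insubdK //; exact: mem_set. Qed.

Lemma val_toP g : Pset R n g -> val (toP g) = g.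
Proof. by move=> Pg; rewrite insubdK //; exact: mem_set. Qed.

Lemma val_toSO g : SOset R n g -> val (toSO g) = g.
Proof. by move=> SOg; rewrite insubdK //; exact: mem_set. Qed.

Lemma qSL_eqP (g h : SLt R n) : qSL g = qSL h <-> cosetSL R n g h.
Proof. exact: (qpi_eqP (cls := cosetSL R n) Qcoset_refl Qcoset_trans). Qed.

Lemma qO_eqP x y : qO x = qO y <-> polar_orbit R n x y.
Proof. exact: (qpi_eqP polar_orbit_refl polar_orbit_trans). Qed.

Lemma cosetP_lmulP {k q} {e f : Pt R n} : Pset R n k -> Qset R n q ->
  val f = k *m val e *m q -> cosetP R n f = lmulP k (cosetP R n e).
Proof.
move=> Pk Qq f_keq; have [q' Qq' qq'] := Qset_inv Qq.
have Pe := set_valP e; rewrite /cosetP /lmulP; apply/seteqP; split=> h /=.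
  move=> [q1 [Qq1 ->]]; have Qqq1 := QsetM Qq Qq1.
  have Peqq1 : Pset R n (val e *m (q *m q1)).
    by apply: PsetM => //; exact: Qset_sub_Pset.
  exists (toP (val e *m (q *m q1))); first by exists (q *m q1); rewrite val_toP.
  by rewrite val_toP // f_keq !mulmxA.
move=> [_ [q2 [Qq2 ->]] ->]; exists (q' *m q2); split; first exact: QsetM.
by rewrite f_keq -!mulmxA (mulmxA q) qq' mul1mx.
Qed.

Lemma qO_eq {q} {r r' : SOt R n} {e e' : Pt R n} : Qset R n q ->
  val r' *m (val r)^T *m val e *m q = val e' -> qO (r', qP e') = qO (r, qP e).
Proof.
move=> Qq e'_eq; apply/esym/qO_eqP; set k := val r' *m (val r)^T.
have SOr := set_valP r; have [q' Qq' qq'] := Qset_inv Qq.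
have SOk : SOset R n k by apply: SOsetM; [exact: set_valP | exact: SOset_tr].
have Pk : Pset R n k.
  apply: (Pset_cancelr (set_valP e)); first exact: SOset_det.
  have -> : k *m val e = val e' *m q' by rewrite -e'_eq -mulmxA qq' mulmx1.
  by apply: PsetM; [exact: set_valP | exact: Qset_sub_Pset].
exists k; split=> //=; first by rewrite -mulmxA SOset_trK // mulmx1.
exact: cosetP_lmulP Pk Qq (esym e'_eq).
Qed.

Definition Mpolar (X : Xpolar R n) : Xspace R n :=
  let x := qrep X in qSL (toSL ((val x.1)^T *m val (qrep x.2))).

Lemma SLset_trmx_mul (r : SOt R n) (e : Pt R n) :
  SLset R n ((val r)^T *m val e).
Proof.
have [SOr Pe] := (set_valP r, set_valP e).
by rewrite /SLset /= det_mulmx det_tr SOset_det // Pset_det // mulr1.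
Qed.

Lemma Mpolar_qpi (r : SOt R n) (e : Pt R n) (g : SLt R n) :
  val g = invmx (val r) *m val e -> Mpolar (qO (r, qP e)) = qSL g.
Proof.
rewrite SOset_inv; last exact: set_valP.
move=> g_eq; rewrite /Mpolar; set x := qrep _.
have [k [Kk x1 x2]] : polar_orbit R n (r, qP e) x.
  by apply/qO_eqP; rewrite qrepK.
have : cosetP R n (qrep x.2) (qrep x.2) by exact: Qcoset_refl.
rewrite qrep_class x2 => -[_ [q [Qq ->]] e2_eq].
apply/esym/qSL_eqP; exists q; split=> //.
rewrite val_toSL; last exact: SLset_trmx_mul.
rewrite e2_eq x1 g_eq trmx_mul -!mulmxA.
by rewrite (mulmxA k^T) SOset_trK ?mul1mx //; case: Kk.
Qed.


Definition admissible s g :=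
  s ^+ 2 = 1 /\ row_sqnorm (unit_adj_row lst g - s *: e_lst) != 0.

Definition polar_frame s g := adj_frame lst s g.

Definition canonical_sign g := axis_sign lst (unit_adj_row lst g).

Lemma admissible_canonical_sign {g} :
  SLset R n g -> admissible (canonical_sign g) g.
Proof.
move=> det_g; split; first exact: axis_sign_sqr.
rewrite gt_eqF // row_sqnorm_axis_sign_gt0 // unit_adj_row_unit //.
by rewrite det_g oner_neq0.
Qed.

Lemma polar_frame_SO {s g} : admissible s g -> SOset R n (polar_frame s g).
Proof.
move=> [_ norm_neq0].
split; first exact: householder_rotation_mulmxT.
exact: det_householder_rotation.
Qed.

Lemma polar_frame_mul_P {s g} :
  SLset R n g -> admissible s g -> Pset R n (polar_frame s g *m g).
Proof.
move=> det_g [s2 norm_neq0].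
have det_neq0 : \det g != 0 by rewrite det_g oner_neq0.
have [c row_eq] := row_adj_frame_mul lst det_neq0 s2 norm_neq0.
apply: Pset_row_last row_eq.
by rewrite det_mulmx det_g mulr1 SOset_det //; exact: polar_frame_SO.
Qed.

Definition polar_pair s g : SOt R n * PQ R n :=
  (toSO (polar_frame s g), qP (toP (polar_frame s g *m g))).

Definition polar_of s g : Xpolar R n := qO (polar_pair s g).

Lemma polar_of_coset {q s s'} {g g' : SLt R n} :
  Qset R n q -> val g' = val g *m q ->
  admissible s (val g) -> admissible s' (val g') ->
  polar_of s' (val g') = polar_of s (val g).
Proof.
move=> Qq g'_eq adm adm'; apply: (qO_eq Qq).
have [SO SO'] := (polar_frame_SO adm, polar_frame_SO adm').
have P := polar_frame_mul_P (set_valP g) adm.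
have P' := polar_frame_mul_P (set_valP g') adm'.
rewrite !val_toSO // !val_toP //; move: SO; set F := polar_frame s _ => SO.
by rewrite -(mulmxA _ F^T) (mulmxA F^T) SOset_trK // mul1mx -mulmxA g'_eq.
Qed.

Definition Mpolar_inv (Y : Xspace R n) : Xpolar R n :=
  let g := val (qrep Y) in polar_of (canonical_sign g) g.

Lemma Mpolar_inv_qpi {s} {g : SLt R n} :
  admissible s (val g) -> Mpolar_inv (qSL g) = polar_of s (val g).
Proof.
move=> adm; rewrite /Mpolar_inv.
have [q [Qq rep_eq]] : cosetSL R n g (qrep (qSL g)).
  by apply/qSL_eqP; rewrite qrepK.
apply: (polar_of_coset Qq rep_eq adm).
by apply: admissible_canonical_sign; exact: set_valP.
Qed.

Lemma Mpolar_invK : cancel Mpolar_inv Mpolar.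
Proof.
move=> Y; set g := qrep Y; have SLg := set_valP g.
have adm := admissible_canonical_sign SLg.
rewrite /Mpolar_inv -/g (Mpolar_qpi _ _ g) ?qrepK //.
have SO := polar_frame_SO adm; have P := polar_frame_mul_P SLg adm.
by rewrite val_toSO // val_toP // SOset_inv // mulmxA SOset_trK ?mul1mx.
Qed.

Lemma MpolarK : cancel Mpolar Mpolar_inv.
Proof.
move=> X; rewrite /Mpolar; set x := qrep X; set e := qrep x.2.
set g := toSL _; have g_eq : val g = (val x.1)^T *m val e.
  by rewrite val_toSL //; exact: SLset_trmx_mul.
have adm := admissible_canonical_sign (set_valP g).
rewrite (Mpolar_inv_qpi adm).
transitivity (qO (x.1, qP e)).
  2: by rewrite /e qrepK -surjective_pairing qrepK.
apply: (qO_eq Qset1); rewrite mulmx1.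
have SO := polar_frame_SO adm; have P := polar_frame_mul_P (set_valP g) adm.
by rewrite val_toSO // val_toP // g_eq !mulmxA.
Qed.

End PolarMap.

Section PolarOfLimits.
Context {R : realType} {n : nat} {T : topologicalType} {f : T -> 'M[R]_(n + 1)}.
Hypothesis f_SL : forall t, SLset R n (f t).
Context {t0 : T}.
Hypothesis f_cont : {for t0, continuous f}.
Local Notation lst := (rshift n (ord0 : 'I_1)).
Local Notation e_lst := (delta_mx 0 lst : 'rV[R]_(n + 1)).

Lemma admissible_near {s} : admissible s (f t0) ->
  \forall t \near t0, admissible s (f t).
Proof.
move=> [s2 norm_neq0].
have det_neq0 : \det (f t0) != 0 by rewrite f_SL oner_neq0.
have norm_cvg : (fun t => row_sqnorm (unit_adj_row lst (f t) - s *: e_lst))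
    @ t0 --> row_sqnorm (unit_adj_row lst (f t0) - s *: e_lst).
  apply: cvg_row_sqnorm; apply: cvgB; last exact: cvg_cst.
  exact: cvg_unit_adj_row.
near=> t; split=> //; near: t; exact: cvgr_neq0 norm_cvg norm_neq0.
Unshelve. all: by end_near. Qed.

Lemma polar_of_cvg {s} : admissible s (f t0) ->
  {for t0, continuous (fun t => polar_of s (f t))}.
Proof.
move=> adm0; have near_adm := admissible_near adm0.
have det_neq0 : \det (f t0) != 0 by rewrite f_SL oner_neq0.
have frame_cvg : (fun t => polar_frame s (f t)) @ t0 --> polar_frame s (f t0).
  by apply: cvg_adj_frame f_cont => //; case: adm0.
have pair_cvg : (fun t => polar_pair s (f t)) @ t0 --> polar_pair s (f t0).
  apply: (cvg_pair (G := nbhs _) (H := nbhs _)).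
    apply: (cvg_insubd (polar_frame_SO adm0) frame_cvg).
    by apply: filterS near_adm => t; exact: polar_frame_SO.
  apply: continuous_cvg; first exact: qpi_continuous.
  apply: (cvg_insubd (polar_frame_mul_P (f_SL t0) adm0)
                     (cvg_mulmx frame_cvg f_cont)).
  by apply: filterS near_adm => t; exact: polar_frame_mul_P.
by apply: continuous_cvg pair_cvg; exact: qpi_continuous.
Qed.

End PolarOfLimits.

Section PolarMapContinuity.
Context {R : realType} {n : nat}.
Local Notation qSL := (qpi (@cosetSL R n)).
Local Notation qP := (qpi (@cosetP R n)).
Local Notation qO := (qpi (@polar_orbit R n)).

Lemma Mpolar_inv_continuous : continuous (@Mpolar_inv R n).
Proof.
apply: quot_continuous => g0.
have adm0 := admissible_canonical_sign (set_valP g0).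
set s := canonical_sign _ in adm0.
have SLval : forall g : SLt R n, SLset R n (val g) by move=> g; exact: set_valP.
have val_cont := @val_set_continuous _ (SLset R n) g0.
have eq_near : {near g0,
    (fun g : SLt R n => polar_of s (val g)) =1 Mpolar_inv \o qSL}.
  apply: filterS (admissible_near SLval val_cont adm0) => g adm /=.
  by rewrite (Mpolar_inv_qpi adm).
rewrite /continuous_at /= (Mpolar_inv_qpi adm0).
exact: cvg_trans (near_eq_cvg eq_near) (polar_of_cvg SLval val_cont adm0).
Qed.

Definition right_Qmul q (e : Pt R n) : Pt R n := toP (val e *m q).

Lemma right_Qmul_continuous q : Qset R n q -> continuous (right_Qmul q).
Proof.
move=> Qq e; have Pq := Qset_sub_Pset Qq.
apply: (cvg_insubd (F := nbhs e)); first by apply: PsetM => //; exact: set_valP.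
  by apply: cvg_mulmx; [exact: val_set_continuous | exact: cvg_cst].
by near=> f; apply: PsetM => //; exact: set_valP.
Unshelve. all: by end_near. Qed.

Lemma qP_open : open_map qP.
Proof.
apply: (qpi_open _ (Qset R n) right_Qmul).
- exact: Qcoset_refl.
- exact: Qcoset_trans.
- exact: right_Qmul_continuous.
move=> e f; split=> [[q [Qq f_eq]] | [q Qq <-]].
  by exists q => //; apply: val_inj; rewrite val_toP // -f_eq; exact: set_valP.
exists q; split=> //; rewrite val_toP //; apply: PsetM; first exact: set_valP.
exact: Qset_sub_Pset.
Qed.

Lemma SOP_to_X_continuous :
  continuous (fun z : SOt R n * Pt R n => qSL (toSL ((val z.1)^T *m val z.2))).
Proof.
move=> z; apply: continuous_cvg; first exact: qpi_continuous.
have fst_cvg : (fun y : SOt R n * Pt R n => val y.1) @ z --> val z.1.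
  exact: (continuous_comp cvg_fst (val_set_continuous _)).
have snd_cvg : (fun y : SOt R n * Pt R n => val y.2) @ z --> val z.2.
  exact: (continuous_comp cvg_snd (val_set_continuous _)).
apply: (cvg_insubd (SLset_trmx_mul _ _) (cvg_mulmx (cvg_trmx fst_cvg) snd_cvg)).
by apply: nearW => y; exact: SLset_trmx_mul.
Qed.

Lemma Mpolar_continuous : continuous (@Mpolar R n).
Proof.
apply: quot_continuous.
apply: (open_map_continuous (fun z : SOt R n * Pt R n => (z.1, qP z.2))).
- exact: open_map_pair_id qP_open.
- by move=> [r c]; exists (r, qrep c); rewrite /= qrepK.
have -> : Mpolar \o qO \o (fun z : SOt R n * Pt R n => (z.1, qP z.2)) =
    (fun z : SOt R n * Pt R n => qSL (toSL ((val z.1)^T *m val z.2))).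
  apply/funext => -[r e] /=; apply: Mpolar_qpi.
  by rewrite val_toSL ?SOset_inv //; [exact: set_valP | exact: SLset_trmx_mul].
exact: SOP_to_X_continuous.
Qed.

End PolarMapContinuity.

Theorem proposition2p2 (R : realType) (n : nat) :
  exists (M : Xpolar R n -> Xspace R n) (Minv : Xspace R n -> Xpolar R n),
    [/\ (forall (rho : SOt R n) (eta : Pt R n) (g : SLt R n),
           val g = invmx (val rho) *m val eta ->
           M (qpi (@polar_orbit R n) (rho, qpi (@cosetP R n) eta))
             = qpi (@cosetSL R n) g),
        cancel M Minv, cancel Minv M, continuous M & continuous Minv].
Proof.
exists Mpolar, Mpolar_inv; split.
- exact: Mpolar_qpi.
- exact: MpolarK.
- exact: Mpolar_invK.
- exact: Mpolar_continuous.
- exact: Mpolar_inv_continuous.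
Qed.
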